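(* The generalized $\mathbb Z^d$ beach model satisfies condition $\mho$. That is: let $A=A_0\uplus A_1$ and $B$ be finite sets with $A_0\neq\emptyset$, let $S=A\times B$, write $s=(\alpha(s),\beta(s))$, and let $X=\{x\in S^{\mathbb Z^d}:\forall n\in\mathbb Z^d,\ 1\le i\le d,\ (\alpha(x_n)\in A_0\text{ and }\alpha(x_{n+e_i})\in A_0)\text{ or }\beta(x_n)=\beta(x_{n+e_i})\}$. Then there is a finite $F\subset\mathbb Z^d$ such that for every $a\in X_F$ the subgroup of $\mathbb Z^S$ generated by $\{\Psi_\sharp(a,b):b\in X_F,\ a_{\partial F}=b_{\partial F}\}$ equals $\mathbb H_{X,\sharp}$.
   Context: $e_1,\dots,e_d$ are the standard unit vectors of $\mathbb Z^d$. Notation: $\|n\|=\max_k|n_k|$, $B(n,r)=\{k:\|k-n\|\le r\}$, $F^o=\{x\in F:B(x,1)\subset F\}$, $\partial F=F\setminus F^o$; $x_\Lambda$ restriction, $X_\Lambda=\{x_\Lambda:x\in X\}$. Tail relation $\mathfrak T(X)=\{(x,y)\in X^2:\exists F\text{ finite},x_{F^c}=y_{F^c}\}$. $\sharp:S\to\mathbb Z^S$, $\sharp(s)=e_s$ (standard basis vector of $\mathbb Z^S$); $\Psi_\sharp(x,y)=\sum_j(e_{y_j}-e_{x_j})$ on $\mathfrak T(X)$; for finite $F$ and $a,b\in X_F$, $\Psi_\sharp(a,b)=\sum_{j\in F}(e_{b_j}-e_{a_j})$; $\mathbb H_{X,\sharp}$ is the subgroup generated by $\{\Psi_\sharp(x,y):(x,y)\in\mathfrak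 T(X)\}$. *)

From HB Require Import structures.
From mathcomp Require Import all_boot all_order all_algebra.
From mathcomp Require Import finmap.
Set Implicit Arguments. Unset Strict Implicit. Unset Printing Implicit Defensive.
Import Order.TTheory GRing.Theory Num.Theory.
Local Open Scope ring_scope.
Local Open Scope fset_scope.

Definition point (d : nat) := {ffun 'I_d -> int}.

Definition unitv (d : nat) (i : 'I_d) : point d := [ffun j => ((j == i) : nat)%:Z].

Definition in_ball1 (d : nat) (n k : point d) : Prop :=
  forall j : 'I_d, `|k j - n j| <= 1.

Definition interior_pt (d : nat) (F : {fset point d}) (n : point d) : Prop :=
  n \in F /\ (forall k, in_ball1 n k -> k \in F).
Definition boundary_pt (d : nat) (F : {fset point d}) (n : point d) : Prop :=
  n \in F /\ ~ interior_pt F n.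

Definition alph (A0 A1 B : finType) : finType := ((A0 + A1)%type * B)%type.

Definition in_beach (d : nat) (A0 A1 B : finType) (x : point d -> alph A0 A1 B) : Prop :=
  forall (n : point d) (i : 'I_d),
    (is_inl (x n).1 /\ is_inl (x (n + unitv i)%R).1) \/ (x n).2 = (x (n + unitv i)%R).2.

Definition sharp (S : finType) (s : S) : {ffun S -> int} := [ffun t => ((t == s) : nat)%:Z].

Definition PsiD (d : nat) (S : finType) (D : {fset point d}) (x y : point d -> S) : {ffun S -> int} :=
  \sum_(j <- D) (sharp (y j) - sharp (x j)).

Definition gen_subgroup (M : zmodType) (P : M -> Prop) (v : M) : Prop :=
  exists (n : nat) (g : 'I_n -> M) (c : 'I_n -> int),
    (forall i, P (g i)) /\ v = \sum_(i < n) g i *~ c i.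

(* generators of H_{X,sharp}: Psi(x,y) for (x,y) in the tail relation of X;
   PsiD D x y equals Psi(x,y) for any finite D outside which x,y agree *)
Definition H_gens (d : nat) (A0 A1 B : finType) (w : {ffun alph A0 A1 B -> int}) : Prop :=
  exists (x y : point d -> alph A0 A1 B) (D : {fset point d}),
    in_beach x /\ in_beach y /\ (forall n, n \notin D -> x n = y n) /\ w = PsiD D x y.

(* Both subgroups equal the zero-sum lattice {v | sum_s v_s = 0}: every Psi has zero sum,
   and conversely each difference e_p - e_q lies in both.  Passing through (a0, beta(p))
   with a0 in A0, it suffices to treat p and q that are both compatible with one b in B
   (alpha in A0, or beta = b).  For such p, q and any x in X, the patch of x which puts p at
   the origin, (a0, b) on the sup-norm sphere of radius 1 and (a0, beta(x_k)) on the sphere of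
   radius 2 lies again in X and agrees with x outside the ball of radius 2, hence on the
   boundary of F = B(0, 3); the patches for p and for q differ only at the origin, where
   Psi between them is e_p - e_q. *)

From HB Require Import structures.
From mathcomp Require Import all_boot all_order all_algebra.
From mathcomp Require Import finmap zify.
Set Implicit Arguments.
Unset Strict Implicit.
Unset Printing Implicit Defensive.
Import Order.TTheory GRing.Theory Num.Theory.
Local Open Scope ring_scope.

Section GenSubgroup.
Variables (M : zmodType) (P : M -> Prop).

Lemma gen_subgroup0 : gen_subgroup P 0.
Proof. by exists 0%N, (fun=> 0), (fun=> 0); split; [case | rewrite big_ord0]. Qed.

Lemma gen_subgroup_gen u : P u -> gen_subgroup P u.
Proof. by move=> Pu; exists 1%N, (fun=> u), (fun=> 1); rewrite big_ord1. Qed.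

Lemma gen_subgroupD u v :
  gen_subgroup P u -> gen_subgroup P v -> gen_subgroup P (u + v).
Proof.
move=> [m [g [c [Pg ->]]]] [n [h [e [Ph ->]]]].
exists (m + n)%N, (fun i => match split i with inl j => g j | inr j => h j end),
  (fun i => match split i with inl j => c j | inr j => e j end); split.
  by move=> i; case: (split i).
by rewrite big_split_ord /=; congr (_ + _); apply: eq_bigr => i _;
  rewrite ?(unsplitK (inl i : 'I_m + 'I_n)) ?(unsplitK (inr i : 'I_m + 'I_n)).
Qed.

Lemma gen_subgroupMz u z : gen_subgroup P u -> gen_subgroup P (u *~ z).
Proof.
move=> [n [g [c [Pg ->]]]]; exists n, g, (fun i => c i * z); split => //.
by rewrite mulrz_suml; apply: eq_bigr => i _; rewrite mulrzA.
Qed.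

Lemma gen_subgroupB u v :
  gen_subgroup P u -> gen_subgroup P v -> gen_subgroup P (u - v).
Proof. by move=> Pu Pv; rewrite -mulrN1z; apply/gen_subgroupD/gen_subgroupMz. Qed.

Lemma gen_subgroup_sum (I : Type) (r : seq I) (f : I -> M) :
  (forall i, gen_subgroup P (f i)) -> gen_subgroup P (\sum_(i <- r) f i).
Proof.
move=> Pf; elim: r => [|i r IHr]; first by rewrite big_nil; apply: gen_subgroup0.
by rewrite big_cons; apply: gen_subgroupD.
Qed.

Lemma gen_subgroup_ind (Q : M -> Prop) :
  Q 0 -> (forall u v, Q u -> Q v -> Q (u + v)) -> (forall u z, Q u -> Q (u *~ z)) ->
  (forall u, P u -> Q u) -> forall v, gen_subgroup P v -> Q v.
Proof.
move=> Q0 QD QMz PQ v [n [g [c [Pg ->]]]].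
by elim/big_ind: _ => // i _; apply/QMz/PQ.
Qed.

End GenSubgroup.

Section Mass.
Variable S : finType.

Definition mass (v : {ffun S -> int}) : int := \sum_s v s.

Fact mass_is_zmod_morphism : zmod_morphism mass.
Proof. by move=> u v; rewrite /mass -sumrB; apply: eq_bigr => s _; rewrite !ffunE. Qed.

HB.instance Definition _ := GRing.isZmodMorphism.Build {ffun S -> int} int mass
  mass_is_zmod_morphism.

Lemma mass_sharp s : mass (sharp s) = 1.
Proof.
rewrite /mass (bigD1 s) //= big1 => [|t /negbTE ts]; first by rewrite ffunE eqxx addr0.
by rewrite ffunE ts.
Qed.

Lemma mass_PsiD d (D : {fset point d}) (x y : point d -> S) : mass (PsiD D x y) = 0.
Proof. by rewrite raddf_sum big1 // => j _; rewrite raddfB /= !mass_sharp subrr. Qed.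

Lemma ffun_sum_sharp (v : {ffun S -> int}) : v = \sum_s sharp s *~ v s.
Proof.
apply/ffunP => t; rewrite sum_ffunE (bigD1 t) //= big1 => [|s /negbTE st].
  by rewrite ffunMzE /sharp ffunE eqxx mulrzz mul1r addr0.
by rewrite ffunMzE /sharp ffunE eq_sym st mul0rz.
Qed.

Lemma gen_subgroup_mass0 (P : {ffun S -> int} -> Prop) :
  (forall w, P w -> mass w = 0) ->
  (forall s t, gen_subgroup P (sharp s - sharp t)) ->
  forall v, gen_subgroup P v <-> mass v = 0.
Proof.
move=> Pmass Pdiff v; split.
  apply: (@gen_subgroup_ind _ _ (fun v => mass v = 0)) => [|u w mu mw|u z mu|//].
  - exact: raddf0.
  - by rewrite raddfD /= mu mw addr0.
  - by rewrite raddfMz /= mu mul0rz.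
move=> mass_v; case: (pickP (@predT S)) => [t _|S0]; last first.
  have -> : v = 0 by apply/ffunP => s; have := S0 s.
  exact: gen_subgroup0.
have -> : v = \sum_s (sharp s - sharp t) *~ v s.
  rewrite [LHS]ffun_sum_sharp; under [RHS]eq_bigr do rewrite mulrzBl.
  by rewrite sumrB -mulrz_sumr -[\sum_s v s]/(mass v) mass_v mulr0z subr0.
by apply: gen_subgroup_sum => s; apply/gen_subgroupMz/Pdiff.
Qed.

End Mass.

Section Boxes.
Variable d : nat.
Implicit Types (n k : point d) (r : nat).

Definition layer k : nat := (\max_j `|k j|)%N.

Lemma layer_leP r k : reflect (forall j, `|k j| <= r%:Z) (layer k <= r)%N.
Proof.
rewrite /layer; apply: (iffP (@bigmax_leqP _ xpredT r _)) => le_kr j; have := le_kr j; lia.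
Qed.

Lemma layer_eq0 k : (layer k == 0)%N = (k == 0).
Proof.
rewrite -leqn0; apply/layer_leP/eqP => [k0|-> j]; last by rewrite ffunE.
by apply/ffunP => j; apply/eqP; rewrite ffunE -normr_le0 k0.
Qed.

Lemma layer0 : layer (0 : point d) = 0%N.
Proof. by apply/eqP; rewrite layer_eq0. Qed.

Lemma in_ball1_sym n k : in_ball1 n k -> in_ball1 k n.
Proof. by move=> nk j; rewrite distrC. Qed.

Lemma in_ball1_unitv n i : in_ball1 n (n + unitv i).
Proof. by move=> j; rewrite !ffunE addrAC subrr add0r; case: (j == i). Qed.

Lemma layer_ball1 n k : in_ball1 n k -> (layer k <= (layer n).+1)%N.
Proof.
move=> nk; apply/layer_leP => j; have := nk j.
have /layer_leP/(_ j) := leqnn (layer n); lia.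
Qed.

Lemma layer_unitv_gt0 n i : (0 < layer n + layer (n + unitv i)%R)%N.
Proof.
rewrite addn_gt0 !lt0n !layer_eq0; case: eqVneq => [->|//].
by rewrite add0r; apply/eqP => /ffunP/(_ i); rewrite !ffunE eqxx.
Qed.

Definition box r : {fset point d} :=
  [fset [ffun j => (f j)%:Z - r%:Z] | f : {ffun 'I_d -> 'I_(r.*2.+1)} in predT]%fset.

Lemma mem_box r k : (k \in box r) = (layer k <= r)%N.
Proof.
apply/imfsetP/layer_leP => [[f _ ->] j|le_kr].
  rewrite ffunE; have := ltn_ord (f j); move: (f j : nat) => m; rewrite -addnn; lia.
exists [ffun j => inord `|k j + r%:Z|]; rewrite ?inE //.
apply/ffunP => j; rewrite !ffunE inordK;
  by have := le_kr j; move: (k j) => z; rewrite -?addnn; lia.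
Qed.

Lemma boundary_box_layer r n : boundary_pt (box r.+1) n -> layer n = r.+1.
Proof.
rewrite /boundary_pt /interior_pt mem_box => -[n_le] interior_n; apply/eqP.
rewrite eqn_leq n_le ltnNge; apply: contra_notN interior_n => n_le_r.
by split=> // k /layer_ball1 k_le; rewrite mem_box (leq_trans k_le).
Qed.

End Boxes.

Lemma PsiD_point d (S : finType) (D : {fset point d}) (x y : point d -> S) c :
  c \in D -> (forall k, k != c -> x k = y k) -> PsiD D x y = sharp (y c) - sharp (x c).
Proof.
move=> cD xy; rewrite /PsiD (big_fsetD1 c) //= big1_seq ?addr0 // => k /andP[_].
by rewrite in_fsetD1 => /andP[kc _]; rewrite xy ?subrr.
Qed.

Lemma PsiD_sub d (S : finType) (D : {fset point d}) (x y z : point d -> S) :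
  PsiD D x y - PsiD D x z = PsiD D z y.
Proof. by rewrite /PsiD -sumrB; apply: eq_bigr => j _; rewrite opprB addrA subrK. Qed.

Section BeachPatch.
Variables (d : nat) (A0 A1 B : finType) (a0 : A0).
Local Notation S := (alph A0 A1 B).
Implicit Types (s t p q : S) (b : B) (x : point d -> S).

Definition beach_adj s t : bool := (is_inl s.1 && is_inl t.1) || (s.2 == t.2).

Lemma beach_adjP s t : reflect ((is_inl s.1 /\ is_inl t.1) \/ s.2 = t.2) (beach_adj s t).
Proof. by apply: (iffP orP) => -[/andP|/eqP]; auto. Qed.

Definition compatible p b : bool := is_inl p.1 || (p.2 == b).

Definition patch_sym p b (l : nat) s : S :=
  match l with 0 => p | 1 => (inl a0, b) | 2 => (inl a0, s.2) | _ => s end.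

Lemma patch_sym_adj p b l l' s t :
  compatible p b -> (l' <= l.+1)%N -> (l <= l'.+1)%N -> (0 < l + l')%N ->
  beach_adj s t -> beach_adj (patch_sym p b l s) (patch_sym p b l' t).
Proof.
rewrite /beach_adj /compatible => pb.
case: l l' => [|[|[|l]]] [|[|[|l']]] //=; rewrite ?andbT ?orbT //.
all: move=> _ _ _ /orP[/andP[s1 t1]|st]; rewrite ?s1 ?t1 ?st ?orbT //.
all: by rewrite eq_sym.
Qed.

Definition patch x p b (k : point d) : S := patch_sym p b (layer k) (x k).

Lemma patch_beach x p b : compatible p b -> in_beach x -> in_beach (patch x p b).
Proof.
move=> pb x_beach n i; have n_ni := in_ball1_unitv n i; apply/beach_adjP.
apply: patch_sym_adj pb (layer_ball1 n_ni) (layer_ball1 (in_ball1_sym n_ni)) _ _.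
  exact: layer_unitv_gt0.
exact/beach_adjP/x_beach.
Qed.

Lemma patch_outer x p b k : (3 <= layer k)%N -> patch x p b k = x k.
Proof. by rewrite /patch; case: (layer k) => [|[|[|]]]. Qed.

Lemma patch_at0 x p b : patch x p b 0 = p.
Proof. by rewrite /patch layer0. Qed.

Lemma patch_off0 x p q b k : k != 0 -> patch x p b k = patch x q b k.
Proof. by rewrite -layer_eq0 /patch; case: (layer k). Qed.

Lemma PsiD_patch x p q b :
  PsiD (box d 3) (patch x q b) (patch x p b) = sharp p - sharp q.
Proof.
rewrite (@PsiD_point _ _ _ _ _ 0) ?patch_at0 ?mem_box ?layer0 //.
by move=> k; apply: patch_off0.
Qed.

Lemma sharp_diff_compatible (P : {ffun S -> int} -> Prop) :
  (forall p q b, compatible p b -> compatible q b -> gen_subgroup P (sharp p - sharp q)) ->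
  forall p q, gen_subgroup P (sharp p - sharp q).
Proof.
move=> Pcomp p q; pose m : S := (inl a0, p.2).
have -> : sharp p - sharp q = (sharp p - sharp m) + (sharp m - sharp q).
  by rewrite addrA subrK.
by apply: gen_subgroupD; [apply: (Pcomp _ _ p.2) | apply: (Pcomp _ _ q.2)];
  rewrite /compatible ?eqxx ?orbT.
Qed.

Lemma H_gens_sharp_diff p q b :
  compatible p b -> compatible q b -> @H_gens d A0 A1 B (sharp p - sharp q).
Proof.
pose c (k : point d) : S := (inl a0, b).
have c_beach : in_beach c by right.
move=> pb qb; exists (patch c q b), (patch c p b), (box d 3).
split; first exact: patch_beach.
split; first exact: patch_beach.
split; last by rewrite PsiD_patch.
move=> k; rewrite mem_box -ltnNge => k_gt3; apply: patch_off0.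
by rewrite -layer_eq0 -lt0n (ltn_trans _ k_gt3).
Qed.

Definition local_gens (F : {fset point d}) x (w : {ffun S -> int}) : Prop :=
  exists y, in_beach y /\ (forall n, boundary_pt F n -> x n = y n) /\ w = PsiD F x y.

Lemma local_gens_sharp_diff x p q b :
  in_beach x -> compatible p b -> compatible q b ->
  gen_subgroup (local_gens (box d 3) x) (sharp p - sharp q).
Proof.
move=> x_beach pb qb; rewrite -(PsiD_patch x p q b) -(PsiD_sub _ x).
have agree r : compatible r b -> local_gens (box d 3) x (PsiD (box d 3) x (patch x r b)).
  move=> rb; exists (patch x r b); split; first exact: patch_beach.
  by split=> // n /boundary_box_layer n3; rewrite patch_outer ?n3.
by apply: gen_subgroupB; apply/gen_subgroup_gen/agree.
Qed.

End BeachPatch.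

Theorem proposition3p3 (d : nat) (A0 A1 B : finType) (hA0 : (0 < #|A0|)%N) :
  exists F : {fset point d},
    forall x : point d -> alph A0 A1 B, in_beach x ->
      forall v : {ffun alph A0 A1 B -> int},
        gen_subgroup (fun w => exists y : point d -> alph A0 A1 B,
                         in_beach y /\ (forall n, boundary_pt F n -> x n = y n) /\
                         w = PsiD F x y) v
        <-> gen_subgroup (@H_gens d A0 A1 B) v.
Proof.
case/card_gt0P: hA0 => a0 _; exists (box d 3) => x x_beach v.
apply: (iff_trans (gen_subgroup_mass0 _ _ v)); last apply: iff_sym (gen_subgroup_mass0 _ _ v).
- by move=> w [y [_ [_ ->]]]; apply: mass_PsiD.
- apply: (sharp_diff_compatible a0) => p q b; exact: (local_gens_sharp_diff a0 x_beach).
- by move=> w [y [z [D [_ [_ [_ ->]]]]]]; apply: mass_PsiD.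
- apply: (sharp_diff_compatible a0) => p q b pb qb.
  exact/gen_subgroup_gen/(H_gens_sharp_diff d a0 pb qb).
Qed.
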